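(* Let $q,M,j,y$ be positive integers with $M,j\in[1,q]$ and $y\in[j,q]$. Then $$|\{a\in[0,M-1]\cap\mathbb{Z}: y-j\le (aj)_q<y\}|=\lfloor Mj/q\rfloor+\chi\big(y\le (Mj)_q\big).$$
   Context: For an integer $\ell$, $(\ell)_q$ denotes the least nonnegative residue of $\ell$ modulo $q$. For an inequality $Q$, $\chi(Q)$ equals $1$ if $Q$ is true and $0$ if $Q$ is false. *)

From mathcomp Require Import all_boot.

From mathcomp Require Import all_boot.
From mathcomp Require Import zify.

(* Induction on [M]: passing from [M j] to [(M+1) j] adds [j] to the residue
   [r = (M j)_q], and since [j <= q] this either keeps the quotient and moves
   the residue to [r + j], or carries once into the quotient and wraps the
   residue to [r + j - q < j <= y].  In both cases the right-hand side grows
   by exactly the indicator of [y - j <= r < y]. *)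

Lemma window_step (q j y r : nat) :
  r < q -> j <= y <= q ->
  (y <= r) + ((y - j <= r) && (r < y))
    = (r + j) %/ q + (y <= (r + j) %% q).
Proof.
move=> rq /andP[jy yq].
have q0 : 0 < q by apply: leq_ltn_trans rq.
case: (ltnP (r + j) q) => [no_carry | carry].
  by rewrite divn_small // modn_small //; lia.
have -> : r + j = 1 * q + (r + j - q) by lia.
by rewrite divnMDl // modnMDl divn_small ?modn_small; lia.
Qed.

Lemma sum_window_mulmod (q j y M : nat) :
  0 < q -> 0 < y -> j <= y <= q ->
  \sum_(a < M) ((y - j <= (a * j) %% q) && ((a * j) %% q < y) : nat)
    = M * j %/ q + (y <= (M * j) %% q).
Proof.
move=> q0 y0 jyq; elim: M => [|M IH].
  by rewrite big_ord0 mul0n div0n mod0n leqNgt y0.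
rewrite big_ord_recr /= IH -addnA (window_step q) ?ltn_mod //.
by rewrite mulSnr [in RHS](divn_eq (M * j) q) -addnA divnMDl // modnMDl addnA.
Qed.

Theorem lemma7p1 (q M j y : nat) :
  0 < q -> 1 <= M <= q -> 1 <= j <= q -> j <= y <= q ->
  #|[set a : 'I_M | (y - j <= (a * j) %% q) && ((a * j) %% q < y)]|
    = M * j %/ q + (y <= (M * j) %% q).
Proof.
move=> q0 _ /andP[j0 _] jyq.
have y0 : 0 < y by case/andP: jyq => /(leq_trans j0).
rewrite -(sum_window_mulmod q j y M q0 y0 jyq) -sum1_card big_mkcond /=.
by apply: eq_bigr => a _; rewrite inE; case: (_ && _).
Qed.
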